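(* Let $\mathcal{H}$ be a hereditary $\sigma$-ring of sets, let $\mu^*$ be an outer measure on $\mathcal{H}$, let $X$ be a set with $X\cap\bigcup\mathcal{H}\neq\emptyset$, and let $\overline{\overline{S}}$ be the class of all $\mu^{**}$-measurable sets. Then $\overline{\overline{S}}$ is a $\sigma$-ring.
   Context: A nonempty class $\mathcal{E}$ of sets is hereditary if $F\in\mathcal{E}$ whenever $E\in\mathcal{E}$ and $F\subseteq E$. A set $E\in\mathcal{H}$ is $\mu^*$-measurable if $\mu^*(A)=\mu^*(A\cap E)+\mu^*(A\cap E')$ for every $A\in\mathcal{H}$, where $E'$ denotes the complement of $E$. Let $\overline{S}$ denote the class of all $\mu^*$-measurable sets. Let $K=\{B\subseteq X: B\cap E\in\mathcal{H}\text{ for all }E\in\mathcal{H}\}$. A set $Q\in K$ is called $\mu^{**}$-measurable if $Q\cap E$ is $\mu^*$-measurable for every $\mu^*$-measurable $E\in\mathcal{H}$, i.e. for all $A\in\mathcal{H}$ and all $E\in\overline{S}$, $\mu^*(A)=\mu^*[A\cap(Q\cap E)]+\mu^*[A\cap(Q\cap E)']$. *)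

From HB Require Import structures.
From mathcomp Require Import all_boot all_order all_algebra.
From mathcomp Require Import all_classical all_reals all_analysis.
Set Implicit Arguments. Unset Strict Implicit. Unset Printing Implicit Defensive.
Import Order.TTheory GRing.Theory Num.Theory.
Local Open Scope classical_set_scope.
Local Open Scope ereal_scope.

Definition hereditary {T : Type} (H : set (set T)) : Prop :=
  forall E F, H E -> F `<=` E -> H F.

Definition outer_measure_on {T : Type} {R : realType}
  (H : set (set T)) (mu : set T -> \bar R) : Prop :=
  [/\ mu set0 = 0,
      (forall A, H A -> 0 <= mu A),
      (forall A B, H A -> H B -> A `<=` B -> mu A <= mu B) &
      (forall F : (set T)^nat, (forall n, H (F n)) ->
          mu (\bigcup_n F n) <= \sum_(0 <= n <oo) mu (F n))].

Definition mu_measurable {T : Type} {R : realType}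
  (H : set (set T)) (mu : set T -> \bar R) (E : set T) : Prop :=
  H E /\ forall A, H A -> mu A = mu (A `&` E) + mu (A `&` ~` E).

Definition classK {T : Type} (H : set (set T)) (X : set T) (B : set T) : Prop :=
  B `<=` X /\ forall E, H E -> H (B `&` E).

Definition mu2_measurable {T : Type} {R : realType}
  (H : set (set T)) (mu : set T -> \bar R) (X : set T) (Q : set T) : Prop :=
  classK H X Q /\
  forall A E, H A -> mu_measurable H mu E ->
    mu A = mu (A `&` (Q `&` E)) + mu (A `&` ~` (Q `&` E)).

From HB Require Import structures.
From mathcomp Require Import all_boot all_order all_algebra.
From mathcomp Require Import all_classical all_reals all_analysis.
Import Order.TTheory GRing.Theory Num.Theory.
Local Open Scope classical_set_scope.
Local Open Scope ereal_scope.

(* Extend mu* to all subsets by +oo outside H.  As H is a hereditary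
   sigma-ring, this is an outer measure whose Caratheodory-measurable sets are
   exactly the Z satisfying the splitting identity for every A in H: for A
   outside H, one of A & Z, A & ~` Z is outside H too, so both sides are +oo.
   Hence Q is mu**-measurable iff Q lies in K and every Q & E (E in S-bar) is
   Caratheodory measurable, and both properties survive differences and
   countable unions. *)

Lemma sigma_ring_setU (T : Type) (G : set (set T)) (A B : set T) :
  sigma_ring G -> G A -> G B -> G (A `|` B).
Proof.
case=> G0 _ Gcup GA GB; rewrite -bigcup2E; apply: Gcup.
by case=> [|[|n]] //=.
Qed.

Lemma setIDl {T : Type} (A B C : set T) :
  (A `\` B) `&` C = (A `&` C) `\` (B `&` C).
Proof.
apply/seteqP; split=> x; first by move=> [[Ax nBx] Cx]; split=> // -[].
by move=> [[Ax Cx] nBCx]; split=> //; split=> // Bx; exact: nBCx.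
Qed.

Lemma hereditary_bigcup {T : Type} {G : set (set T)} {F : (set T)^nat} :
  hereditary G -> G (\bigcup_n F n) -> forall n, G (F n).
Proof. by move=> hG GF n; apply: hG GF _; exact: bigcup_sup. Qed.

Section infinite_extension.
Variables (T : Type) (R : realType) (H : set (set T)) (mu : set T -> \bar R).
Hypotheses (sH : sigma_ring H) (hH : hereditary H) (muH : outer_measure_on H mu).

Definition mu_ext (A : set T) : \bar R := if `[< H A >] then mu A else +oo.

Lemma mu_extE {A} : H A -> mu_ext A = mu A.
Proof. by move=> HA; rewrite /mu_ext asboolT. Qed.

Lemma mu_extNH {A} : ~ H A -> mu_ext A = +oo.
Proof. by move=> HA; rewrite /mu_ext asboolF. Qed.

Let mu_ext0 : mu_ext set0 = 0.
Proof. by case: sH muH => H0 _ _ [mu0 _ _ _]; rewrite mu_extE. Qed.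

Let mu_ext_ge0 A : 0 <= mu_ext A.
Proof.
by case: muH => _ mu_ge0 _ _; rewrite /mu_ext; case: asboolP => // HA; exact: mu_ge0.
Qed.

Let mu_ext_le : {homo mu_ext : A B / A `<=` B >-> A <= B}.
Proof.
move=> A B AB; have [HB|HB] := pselect (H B); last by rewrite (mu_extNH HB) leey.
have HA : H A by apply: hH HB AB.
rewrite !mu_extE //.
by case: muH => _ _ mu_le _; exact: mu_le.
Qed.

Let mu_ext_sigma_subadditive : sigma_subadditive mu_ext.
Proof.
move=> F; have [HU|HU] := pselect (H (\bigcup_n F n)).
  have HF := hereditary_bigcup hH HU.
  rewrite mu_extE // (eq_eseriesr (g := mu \o F)); last by move=> n _; rewrite mu_extE.
  by case: muH => _ _ _; apply.
have [n HFn] : exists n, ~ H (F n).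
  apply: contrapT => allH; apply: HU; case: sH => _ _; apply=> n.
  by apply: contrapT => HFn; apply: allH; exists n.
by rewrite mu_extNH // (@nneseries_pinfty _ _ _ n) // mu_extNH.
Qed.

HB.instance Definition _ := isOuterMeasure.Build R T mu_ext
  mu_ext0 mu_ext_ge0 mu_ext_le mu_ext_sigma_subadditive.

Lemma caratheodory_mu_extP Z :
  (forall A, H A -> mu A = mu (A `&` Z) + mu (A `&` ~` Z)) <->
  mu_ext.-caratheodory Z.
Proof.
split=> [splitZ A|cZ A HA]; last first.
  by have := cZ A; rewrite !mu_extE //; apply: hH HA _; exact: subIsetl.
have [HA|HA] := pselect (H A).
  by rewrite !mu_extE //; [exact: splitZ | apply: hH HA _; exact: subIsetl ..].
have mu_ext_neqNy B : mu_ext B != -oo.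
  by rewrite gt_eqF // (lt_le_trans _ (mu_ext_ge0 _)) ?ltNy0.
have [HAZ|HAZ'] : ~ H (A `&` Z) \/ ~ H (A `&` ~` Z).
  apply: contrapT => /not_orP[/contrapT HAZ /contrapT HAZ']; apply: HA.
  by rewrite -(setIT A) -(setUv Z) setIUr; exact: sigma_ring_setU.
- by rewrite (mu_extNH HA) (mu_extNH HAZ) addye ?mu_ext_neqNy.
- by rewrite (mu_extNH HA) (mu_extNH HAZ') addey ?mu_ext_neqNy.
Qed.

Lemma mu2_measurableP X Q : mu2_measurable H mu X Q <->
  classK H X Q /\ forall E, mu_measurable H mu E -> mu_ext.-caratheodory (Q `&` E).
Proof.
split=> -[KQ splitQ]; split=> //.
  by move=> E mE; apply/caratheodory_mu_extP => A HA; exact: splitQ.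
by move=> A E HA mE; exact: (caratheodory_mu_extP _).2 (splitQ E mE) A HA.
Qed.

End infinite_extension.

Section classK_sigma_ring.
Variables (T : Type) (H : set (set T)) (X : set T).
Hypotheses (sH : sigma_ring H) (hH : hereditary H).

Lemma classK_set0 : classK H X set0.
Proof. by split=> // E _; rewrite set0I; case: sH. Qed.

Lemma classK_setD Q1 Q2 : classK H X Q1 -> classK H X (Q1 `\` Q2).
Proof.
move=> [Q1X KQ1]; split=> [x [/Q1X]//|E HE].
by apply: hH (KQ1 E HE) _ => x [[]].
Qed.

Lemma classK_bigcup (F : (set T)^nat) :
  (forall n, classK H X (F n)) -> classK H X (\bigcup_n F n).
Proof.
move=> KF; split=> [x [n _ /(proj1 (KF n))]//|E HE].
by rewrite setI_bigcupl; case: sH => _ _; apply=> n; exact: (proj2 (KF n)).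
Qed.

End classK_sigma_ring.

Theorem theorem3p2 (T : Type) (R : realType) (H : set (set T))
  (mu : set T -> \bar R) (X : set T) :
  sigma_ring H -> hereditary H -> outer_measure_on H mu ->
  X `&` \bigcup_(E in H) E !=set0 ->
  sigma_ring (mu2_measurable H mu X).
Proof.
move=> sH hH muH _.
have mu2P := @mu2_measurableP T R H mu sH hH muH X.
split.
- apply/mu2P; split; first exact: classK_set0.
  by move=> E _; rewrite set0I; exact: caratheodory_measurable_set0.
- move=> Q1 Q2 /mu2P[KQ1 cQ1] /mu2P[_ cQ2]; apply/mu2P.
  split=> [|E mE]; first exact: classK_setD.
  by rewrite setIDl; apply: caratheodory_measurable_setD; [exact: cQ1 | exact: cQ2].
- move=> F mF; apply/mu2P; split.
    by apply: classK_bigcup => // n; have /mu2P[] := mF n.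
  move=> E mE; rewrite setI_bigcupl; apply: caratheodory_measurable_bigcup => n.
  by have /mu2P[_] := mF n; apply.
Qed.
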